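(* Let $1\le p<\infty$. The Hamming graphs $([\mathbb N]^k,d^{(k)}_{\mathsf H})$, $k\in\mathbb N$, equi-coarsely embed into the Banach space $\big(\bigoplus_{k=1}^\infty\ell_p^k(T^* )\big)_{T^*}$.
   Context: $d^{(k)}_{\mathsf H}(\bar m,\bar n)=|\{j:m_j\ne n_j\}|$ for $\bar m=\{m_1<\dots<m_k\},\bar n=\{n_1<\dots<n_k\}\in[\mathbb N]^k$. $T^*$ is the dual of Tsirelson's space $T$ (completion of $c_{00}$ under $\|x\|_T=\max\{\|x\|_\infty,\frac12\sup\sum_{j=1}^n\|E_j(x)\|_T\}$, supremum over $n$ and finite sets $n\le E_1<\dots<E_n$), with its $1$-unconditional basis $(e_j)$. $\ell_p^k(T^* )$ is the $\ell_p^k$-sum of $k$ copies of $T^*$; $(\bigoplus Y_k)_{T^*}$ consists of $(y_k)$ with $\sum\|y_k\|e_k$ convergent in $T^*$, normed by $\|\sum\|y_k\|e_k\|_{T^*}$. A family $(M_i)$ of metric spaces equi-coarsely embeds into $Y$ if there are non-decreasing $\rho,\omega:[0,\infty)\to[0,\infty)$ with $\lim_{t\to\infty}\rho(t)=\infty$ and maps $f_i:M_i\to Y$ with $\rho(d(x,y))\le d_Y(f_i(x),f_i(y))\le\omega(d(x,y))$ for all $i$ and $x,y\in M_i$. *)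

From HB Require Import structures.
From mathcomp Require Import all_boot all_order all_algebra.
From mathcomp Require Import all_classical all_reals all_analysis.
Set Implicit Arguments. Unset Strict Implicit. Unset Printing Implicit Defensive.
Import Order.TTheory GRing.Theory Num.Theory.
Local Open Scope classical_set_scope.
Local Open Scope ring_scope.

Section Defs.
Variable R : realType.

(* Indexing convention: a real sequence x : nat -> R has coordinate j standing
   for the coefficient of the (j+1)-th unit vector e_(j+1). *)

Definition c00 (x : nat -> R) : Prop :=
  exists N : nat, forall j : nat, (N <= j)%N -> x j = 0.

Definition restrict (E : seq nat) (x : nat -> R) : nat -> R :=
  fun j => if j \in E then x j else 0.

Definition supnorm (x : nat -> R) : R := sup (range (fun j => `|x j|)).

(** Es = [E_1; ...; E_n] are finite, nonempty sets (strictly increasing lists)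
    with E_1 < E_2 < ... < E_n and n <= min E_1 (1-based indices, i.e.
    n <= head E_1 + 1 in our 0-based coordinates). *)
Definition admissible (Es : seq (seq nat)) : bool :=
  [&& all (fun E => (E != [::]) && sorted ltn E) Es,
      sorted (fun E F => (last 0%N E < head 0%N F)%N) Es &
      (if Es is E1 :: _ then (size Es <= (head 0%N E1).+1)%N else true)].

(** Figiel–Johnson iteration producing Tsirelson's norm:
    |x|_0 = |x|_oo,
    |x|_(m+1) = max(|x|_m, 1/2 sup sum_j |E_j x|_m) over admissible (E_j). *)
Fixpoint tsi_iter (m : nat) (x : nat -> R) : R :=
  match m with
  | 0 => supnorm x
  | m'.+1 => Num.max (tsi_iter m' x)
      (2^-1 * sup [set (\sum_(E <- Es) tsi_iter m' (restrict E x))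
                  | Es in [set Es | admissible Es]])
  end.

(** Tsirelson's norm on c00: the (increasing) limit of the iterates, i.e. the
    unique norm on c00 with
    |x|_T = max{ |x|_oo, 1/2 sup sum_j |E_j x|_T }. *)
Definition Tnorm (x : nat -> R) : R := sup (range (fun m => tsi_iter m x)).

(** The unit ball of (c00, |.|_T) paired against y: T is the completion of c00,
    so a functional on T is a sequence y bounded on this set. *)
Definition Tdual_pairings (y : nat -> R) : set R :=
  [set r | exists (x : nat -> R) (N : nat),
     (forall j, (N <= j)%N -> x j = 0) /\ Tnorm x <= 1 /\
     r = `| \sum_(j < N) y j * x j |].

Definition in_Tdual (y : nat -> R) : Prop := has_ubound (Tdual_pairings y).

Definition Tdual_norm (y : nat -> R) : R := sup (Tdual_pairings y).

Definition partial_seq (a : nat -> R) (N : nat) : nat -> R :=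
  fun j => if (j < N)%N then a j else 0.

Definition Tdual_series_converges (a : nat -> R) : Prop :=
  exists y : nat -> R, in_Tdual y /\
    (fun N => Tdual_norm (fun j => y j - partial_seq a N j)) @ \oo --> 0.

(** l_p^k(T^* ): u : nat -> (nat -> R), coordinates u 0, ..., u (k-1) in T^* *)
Definition lpk_norm (p : R) (k : nat) (u : nat -> nat -> R) : R :=
  (\sum_(i < k) (Tdual_norm (u i)) `^ p) `^ (p^-1).

(** An element is z : nat -> nat -> nat -> R
    where block b (b : nat) is the l_p^(b+1)(T^* ) component (k = b+1),
    placed on the basis vector e_(b+1) = e_k of T^*; its coordinates are
    z b 0, ..., z b b.  (Entries z b i with i > b are ignored.) *)
Definition Z_block_norms (p : R) (z : nat -> nat -> nat -> R) : nat -> R :=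
  fun b => lpk_norm p b.+1 (z b).

Definition Z_mem (p : R) (z : nat -> nat -> nat -> R) : Prop :=
  (forall b i : nat, (i <= b)%N -> in_Tdual (z b i)) /\
  Tdual_series_converges (Z_block_norms p z).

Definition Z_norm (p : R) (z : nat -> nat -> nat -> R) : R :=
  Tdual_norm (Z_block_norms p z).

Definition Z_dist (p : R) (z z' : nat -> nat -> nat -> R) : R :=
  Z_norm p (fun b i j => z b i j - z' b i j).

Definition equi_coarse_embeds (I : Type) (X : I -> Type)
  (dom : forall i, X i -> Prop) (d : forall i, X i -> X i -> R)
  (Y : Type) (memY : Y -> Prop) (dY : Y -> Y -> R) : Prop :=
  exists (rho omega : R -> R),
    (forall t, 0 <= t -> 0 <= rho t) /\ (forall t, 0 <= t -> 0 <= omega t) /\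
    (forall s t, 0 <= s -> s <= t -> rho s <= rho t) /\
    (forall s t, 0 <= s -> s <= t -> omega s <= omega t) /\
    (forall M : R, exists t0 : R, forall t, t0 <= t -> M <= rho t) /\
    exists f : forall i, X i -> Y,
      forall i (x y : X i), dom i x -> dom i y ->
        memY (f i x) /\
        rho (d i x y) <= dY (f i x) (f i y) <= omega (d i x y).

End Defs.

(** [N]^k: k-element subsets {m_1 < ... < m_k} of N, as strictly increasing
    lists of length k. *)
Definition hamming_pt (k : nat) (s : seq nat) : bool :=
  (size s == k) && sorted ltn s.

Definition hamming_dist (s t : seq nat) : nat :=
  \sum_(j < size s) (nth 0%N s j != nth 0%N t j).

From Pilot Require Import Defs.
From mathcomp Require Import all_boot all_order all_algebra.
From mathcomp Require Import all_classical all_reals all_analysis.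
From mathcomp Require Import lra.
Set Implicit Arguments. Unset Strict Implicit. Unset Printing Implicit Defensive.
Import Order.TTheory GRing.Theory Num.Theory.
Local Open Scope classical_set_scope.
Local Open Scope ring_scope.

(* A point {m_1 < ... < m_k} of [N]^k goes to (e_(m_1), ..., e_(m_k)) in the k-th
   summand, the l_p-sum of k copies of T^*.  On finitely supported vectors the norms
   of T and of T^* both lie between the sup norm and the l1 norm: for T because the
   sets of an admissible family are pairwise disjoint, for T^* by duality against unit
   vectors.  So e_m - e_n has T^*-norm in [1, 2] when m <> n, and two points at Hamming
   distance d are sent to vectors at distance between d^(1/p) and 2 d^(1/p), since a
   vector of the sum carried by a single summand has the norm it has in that summand. *)

Lemma sorted_ltn_head_last (E : seq nat) j :
  sorted ltn E -> j \in E -> (head 0 E <= j <= last 0 E)%N.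
Proof.
move=> /(sub_sorted ltnW) sE jE.
have jlt : (index j E < size E)%N by rewrite index_mem.
have E0 : (0 < size E)%N := leq_ltn_trans (leq0n _) jlt.
rewrite -[in X in (_ <= X <= _)%N](nth_index 0%N jE) -nth0 -nth_last.
have lE := sorted_leq_nth leq_trans leqnn 0%N sE.
by rewrite !lE ?inE ?prednK // -ltnS prednK.
Qed.

Definition nonempty_sorted (E : seq nat) := (E != [::]) && sorted ltn E.

Definition precedes (E F : seq nat) := (last 0 E < head 0 F)%N.

Lemma precedes_trans : {in nonempty_sorted & &, transitive precedes}.
Proof.
move=> [|a F] E G /andP[// _ sF] _ _ EF FG.
have /andP[_ lF] := sorted_ltn_head_last sF (mem_head a F).
exact: ltn_trans EF (leq_ltn_trans lF FG).
Qed.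

Lemma precedes_disjoint E F j :
  nonempty_sorted E -> nonempty_sorted F -> precedes E F -> j \in E -> j \notin F.
Proof.
move=> /andP[_ sE] /andP[_ sF] EF jE; apply/negP=> jF.
have /andP[_ jlE] := sorted_ltn_head_last sE jE.
have /andP[hFj _] := sorted_ltn_head_last sF jF.
by have := leq_trans EF (leq_trans hFj jlE); rewrite ltnn.
Qed.

Lemma admissible_count_mem (Es : seq (seq nat)) j :
  admissible Es -> (count (fun E => j \in E) Es <= 1)%N.
Proof.
case/and3P=> + + _; elim: Es => //= E Es IH /andP[gE gEs].
rewrite (path_sorted_inE precedes_trans); last by apply/andP.
move=> /andP[EEs sEs].
case: (boolP (j \in E)) => jE /=; last by rewrite add0n IH.
rewrite -[1%N]addn0 leq_add2l leqNgt -has_count; apply/hasPn => F FEs.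
by apply: precedes_disjoint jE => //; [exact: (allP gEs) | exact: (allP EEs)].
Qed.

Section TsirelsonDual.
Variable R : realType.
Implicit Types (x y : nat -> R) (M N : nat).

Definition supported x N := forall j, (N <= j)%N -> x j = 0.

Definition l1norm x N := \sum_(j < N) `|x j|.

Lemma l1norm_ge0 x N : 0 <= l1norm x N.
Proof. exact: sumr_ge0. Qed.

Lemma normr_le_l1norm x N j : supported x N -> `|x j| <= l1norm x N.
Proof.
move=> xN; case: (ltnP j N) => [jN|/xN->]; last by rewrite normr0 l1norm_ge0.
by rewrite /l1norm (bigD1 (Ordinal jN)) //= lerDl sumr_ge0.
Qed.

Lemma sum_supported (F : nat -> R) M N : supported F N -> (N <= M)%N ->
  \sum_(j < M) F j = \sum_(j < N) F j.
Proof.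
move=> FN NM; rewrite -!(big_mkord xpredT) (big_cat_nat (leq0n N) NM) /=.
by rewrite [X in _ + X]big_nat_cond [X in _ + X]big1 ?addr0 // => j /andP[/andP[/FN]].
Qed.

Lemma supported_restrict (E : seq nat) x N :
  supported x N -> supported (Defs.restrict E x) N.
Proof. by move=> xN j /xN xj; rewrite /Defs.restrict xj if_same. Qed.

Lemma sum_normr_restrict (Es : seq (seq nat)) x j :
  \sum_(E <- Es) `|Defs.restrict E x j| = (count (fun E => j \in E) Es)%:R * `|x j|.
Proof.
elim: Es => [|E Es IH]; first by rewrite big_nil mul0r.
rewrite big_cons IH /Defs.restrict /=.
by case: (j \in E); rewrite ?normr0 ?add0r // natrD mulrDl mul1r.
Qed.

Lemma sum_l1norm_restrict Es x N : admissible Es ->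
  \sum_(E <- Es) l1norm (Defs.restrict E x) N <= l1norm x N.
Proof.
move=> /admissible_count_mem adm; rewrite /l1norm exchange_big /=.
apply: ler_sum => j _; rewrite sum_normr_restrict.
by have := adm j; case: count => [|[]] // _; rewrite ?mul0r ?mul1r.
Qed.

Lemma tsi_iter_le_l1norm m x N : supported x N -> tsi_iter m x <= l1norm x N.
Proof.
elim: m x => [|m IH] x xN /=.
  apply: ge_sup; first by exists `|x 0%N|, 0%N.
  by move=> _ [j _ <-]; exact: normr_le_l1norm.
rewrite ge_max IH //=.
suff : sup [set \sum_(E <- Es) tsi_iter m (Defs.restrict E x) | Es in admissible]
         <= l1norm x N.
  by have := l1norm_ge0 x N; lra.
apply: ge_sup; first by exists 0, [::]; rewrite ?big_nil.
move=> _ [Es adm <-]; apply: le_trans (sum_l1norm_restrict x N adm).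
by apply: ler_sum => E _; apply/IH/supported_restrict.
Qed.

Lemma supported_single x a : (forall j, j != a -> x j = 0) -> supported x a.+1.
Proof. by move=> xa j aj; rewrite xa // gtn_eqF. Qed.

Lemma l1norm_single x a : (forall j, j != a -> x j = 0) -> l1norm x a.+1 = `|x a|.
Proof.
move=> xa; rewrite /l1norm big_ord_recr /= big1 ?add0r // => j _.
by rewrite xa ?normr0 // ltn_eqF.
Qed.

Lemma Tnorm_le_l1norm x N : supported x N -> Tnorm x <= l1norm x N.
Proof.
move=> xN; apply: ge_sup; first by exists (tsi_iter 0 x), 0%N.
by move=> _ [m _ <-]; exact: tsi_iter_le_l1norm.
Qed.

Lemma normr_le_Tnorm x N j : supported x N -> `|x j| <= Tnorm x.
Proof.
move=> xN; have ub : has_ubound (range (fun m => tsi_iter m x)).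
  by exists (l1norm x N) => _ [m _ <-]; exact: tsi_iter_le_l1norm.
apply: le_trans (_ : tsi_iter 0 x <= _); last by apply: (ub_le_sup ub); exists 0%N.
rewrite /= /supnorm; apply: ub_le_sup; last by exists j.
by exists (l1norm x N) => _ [i _ <-]; exact: normr_le_l1norm.
Qed.

Definition uvec (a : nat) : nat -> R := fun j => (j == a)%:R.

Lemma uvec_single a j : j != a -> uvec a j = 0.
Proof. by rewrite /uvec => /negbTE->. Qed.

Lemma uvec_id a : uvec a a = 1.
Proof. by rewrite /uvec eqxx. Qed.

Lemma supported_uvec a : supported (uvec a) a.+1.
Proof. exact/supported_single/uvec_single. Qed.

Lemma l1norm_uvec a N : (a < N)%N -> l1norm (uvec a) N = 1.
Proof.
move=> aN; have uaN : supported (fun j => `|uvec a j|) a.+1.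
  by move=> j /supported_uvec->; rewrite normr0.
rewrite /l1norm (sum_supported uaN aN) -/(l1norm _ _) l1norm_single ?uvec_id ?normr1 //.
exact: uvec_single.
Qed.

Lemma Tnorm_uvec_le1 a : Tnorm (uvec a) <= 1.
Proof. by rewrite -(l1norm_uvec (ltnSn a)) (Tnorm_le_l1norm (@supported_uvec a)). Qed.

Lemma Tdual_pairings_le_l1norm y N :
  supported y N -> ubound (Tdual_pairings y) (l1norm y N).
Proof.
move=> yN _ [x [M [xM [x1 ->]]]].
have xyM : supported (fun j => y j * x j) M by move=> j /xM->; rewrite mulr0.
have xyN : supported (fun j => y j * x j) N by move=> j /yN->; rewrite mul0r.
rewrite -(sum_supported xyM (leq_maxl M N)) (sum_supported xyN (leq_maxr M N)).
apply: le_trans (ler_norm_sum _ _ _) _; apply: ler_sum => j _.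
rewrite normrM ler_piMr //; exact: le_trans (normr_le_Tnorm j xM) x1.
Qed.

Lemma in_Tdual_supported y N : supported y N -> in_Tdual y.
Proof. by move=> yN; exists (l1norm y N); exact: Tdual_pairings_le_l1norm. Qed.

Lemma Tdual_norm_le_l1norm y N : supported y N -> Tdual_norm y <= l1norm y N.
Proof.
move=> yN; apply: ge_sup; last exact: Tdual_pairings_le_l1norm.
have x0 : supported (fun=> 0 : R) 0 by [].
exists 0, (fun=> 0), 0%N; rewrite big_ord0 normr0; split=> //; split=> //.
by rewrite (le_trans (Tnorm_le_l1norm x0)) // /l1norm big_ord0.
Qed.

Lemma normr_le_Tdual_norm y N a : supported y N -> `|y a| <= Tdual_norm y.
Proof.
move=> yN; apply: ub_le_sup; first exact: in_Tdual_supported yN.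
exists (uvec a), a.+1; split; first exact: supported_uvec.
split; first exact: Tnorm_uvec_le1.
rewrite big_ord_recr /= big1 ?add0r; first by rewrite uvec_id mulr1.
by move=> j _; rewrite uvec_single ?mulr0 // ltn_eqF.
Qed.

Lemma Tdual_norm_single y a : (forall j, j != a -> y j = 0) -> Tdual_norm y = `|y a|.
Proof.
move=> ya; apply/eqP; rewrite eq_le (normr_le_Tdual_norm _ (supported_single ya)).
by rewrite -(l1norm_single ya) (Tdual_norm_le_l1norm (supported_single ya)).
Qed.

Lemma Tdual_norm0 y : (forall j, y j = 0) -> Tdual_norm y = 0.
Proof. by move=> y0; rewrite (@Tdual_norm_single _ 0) // y0 normr0. Qed.

Lemma Tdual_norm_uvecB a b : a != b ->
  1 <= Tdual_norm (fun j => uvec a j - uvec b j) <= 2.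
Proof.
move=> ab; set N := (maxn a b).+1.
have aN : (a < N)%N by rewrite ltnS leq_maxl.
have bN : (b < N)%N by rewrite ltnS leq_maxr.
have yN : supported (fun j => uvec a j - uvec b j) N.
  by move=> j Nj; rewrite !supported_uvec ?subr0 // (leq_trans _ Nj).
apply/andP; split.
  by have := normr_le_Tdual_norm a yN; rewrite uvec_id uvec_single ?subr0 ?normr1 // eq_sym.
apply: le_trans (Tdual_norm_le_l1norm yN) _.
apply: le_trans (_ : _ <= l1norm (uvec a) N + l1norm (uvec b) N) _.
  by rewrite /l1norm -big_split; apply: ler_sum => j _; exact: ler_normB.
by rewrite !l1norm_uvec //; lra.
Qed.

Section SumOfLpSpaces.
Variable p : R.
Hypothesis p_ge1 : 1 <= p.

Let p_gt0 : 0 < p := lt_le_trans ltr01 p_ge1.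
Let p_neq0 : p != 0 := lt0r_neq0 p_gt0.
Let invp_ge0 : 0 <= p^-1. Proof. by rewrite invr_ge0 ltW. Qed.
Let invp_neq0 : p^-1 != 0 := invr_neq0 p_neq0.

Lemma ler_powR_invp s t : 0 <= s -> s <= t -> s `^ p^-1 <= t `^ p^-1.
Proof. by move=> s0 st; rewrite ge0_ler_powR // nnegrE (le_trans s0). Qed.

Lemma powR_invp_unbounded (M : R) : exists t0, forall t, t0 <= t -> M <= t `^ p^-1.
Proof.
exists (`|M| `^ p) => t Mt; apply: le_trans (ler_norm M) _.
rewrite -[X in X <= _](@powRr1 _ `|M|) // -(mulfV p_neq0) powRrM.
exact/ler_powR_invp/Mt/powR_ge0.
Qed.

Lemma sum_powR_bounds n (c : 'I_n -> R) (D : pred 'I_n) :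
    (forall i, D i -> 1 <= c i <= 2) -> (forall i, ~~ D i -> c i = 0) ->
  (\sum_i (D i)%:R) `^ p^-1 <= (\sum_i c i `^ p) `^ p^-1 <= 2 * (\sum_i (D i)%:R) `^ p^-1.
Proof.
move=> cD c0.
have term i : (D i)%:R <= c i `^ p <= 2 `^ p * (D i)%:R.
  case: (boolP (D i)) => Di /=; last by rewrite c0 // powR0 // mulr0 lexx.
  have /andP[c1 c2] := cD i Di; rewrite mulr1 (le_trans c1 (le1r_powR c1 p_ge1)) /=.
  by rewrite ge0_ler_powR ?nnegrE ?(ltW p_gt0) // (le_trans ler01 c1).
have d0 : 0 <= \sum_i ((D i)%:R : R) by apply: sumr_ge0.
apply/andP; split.
  by apply: ler_powR_invp => //; apply: ler_sum => i _; case/andP: (term i).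
have root2 : (2 `^ p) `^ p^-1 = 2 :> R by rewrite -powRrM mulfV ?powRr1.
rewrite -[X in _ <= X * _]root2 -powRM ?powR_ge0 //; apply: ler_powR_invp.
  by apply: sumr_ge0 => i _; exact: powR_ge0.
by rewrite mulr_sumr; apply: ler_sum => i _; case/andP: (term i).
Qed.

Lemma lpk_norm0 n u : (forall i j, u i j = 0) -> lpk_norm p n u = 0.
Proof.
move=> u0; rewrite /lpk_norm big1 ?powR0 // => i _.
by rewrite Tdual_norm0 ?powR0.
Qed.

Lemma supported_series_converges w N : supported w N -> Tdual_series_converges w.
Proof.
move=> wN; exists w; split; first exact: in_Tdual_supported wN.
apply: (cvg_near_cst 0); near=> n; apply: Tdual_norm0 => j; rewrite /partial_seq.
case: ltnP => [_|nj]; first by rewrite subrr.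
by rewrite wN ?subr0 //; apply: leq_trans nj; near: n; exists N.
Unshelve. all: end_near.
Qed.

Section SingleBlock.
Variables (z : nat -> nat -> nat -> R) (b0 : nat).
Hypothesis z_off : forall b i j, b != b0 -> z b i j = 0.

Lemma Z_norm_single_block : Z_norm p z = lpk_norm p b0.+1 (z b0).
Proof.
rewrite /Z_norm (Tdual_norm_single (a := b0)) ?ger0_norm ?powR_ge0 // => b bb0.
by apply: lpk_norm0 => i j; exact: z_off.
Qed.

Lemma Z_mem_single_block : (forall b i, exists N, supported (z b i) N) -> Z_mem p z.
Proof.
move=> zN; split; first by move=> b i _; have [N] := zN b i; exact: in_Tdual_supported.
apply: (@supported_series_converges _ b0.+1); apply: supported_single => b bb0.
by apply: lpk_norm0 => i j; exact: z_off.
Qed.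

End SingleBlock.

Definition hamming_embedding (k : nat) (s : seq nat) : nat -> nat -> nat -> R :=
  fun b i => if (b.+1 == k) && (i < k)%N then uvec (nth 0 s i) else fun=> 0.

Lemma hamming_embedding_off k s b i j : b != k.-1 -> hamming_embedding k s b i j = 0.
Proof. by rewrite /hamming_embedding; case: k => [|k] //=; rewrite eqSS => /negbTE->. Qed.

Lemma Z_mem_hamming_embedding k s : Z_mem p (hamming_embedding k s).
Proof.
apply: (Z_mem_single_block (b0 := k.-1)); first exact: hamming_embedding_off.
move=> b i; rewrite /hamming_embedding; case: ifP => _; last by exists 0%N.
by exists (nth 0 s i).+1; exact: supported_uvec.
Qed.

Lemma Z_dist_hamming_embedding k s t : size s = k ->
  (hamming_dist s t)%:R `^ p^-1
    <= Z_dist p (hamming_embedding k s) (hamming_embedding k t)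
    <= 2 * (hamming_dist s t)%:R `^ p^-1.
Proof.
move=> sk; rewrite /Z_dist (Z_norm_single_block (b0 := k.-1)); last first.
  by move=> b i j bk; rewrite !hamming_embedding_off ?subr0.
rewrite /lpk_norm /hamming_dist sk natr_sum; case: k sk => [|k] sk /=.
  rewrite big_ord0 big1 ?powR0 ?mulr0 ?lexx // => i _.
  by rewrite Tdual_norm0 ?powR0 // => j; rewrite subr0.
apply: (sum_powR_bounds (D := fun i : 'I_k.+1 => nth 0 s i != nth 0 t i)) => i.
  by rewrite /hamming_embedding eqxx ltn_ord; exact: Tdual_norm_uvecB.
rewrite negbK => /eqP e; apply: Tdual_norm0 => j.
by rewrite /hamming_embedding eqxx ltn_ord e subrr.
Qed.

End SumOfLpSpaces.

End TsirelsonDual.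

Theorem proposition4p2 (R : realType) (p : R) (hp : 1 <= p) :
  @equi_coarse_embeds R nat (fun _ : nat => seq nat)
    (fun k s => hamming_pt k s)
    (fun _ s t => (hamming_dist s t)%:R)
    (nat -> nat -> nat -> R)
    (@Z_mem R p) (@Z_dist R p).
Proof.
exists (fun t => t `^ p^-1), (fun t => 2 * t `^ p^-1).
split; first by move=> t _; exact: powR_ge0.
split; first by move=> t _; rewrite mulr_ge0 ?powR_ge0.
split; first exact: ler_powR_invp.
split; first by move=> s t s0 st; rewrite ler_pM2l ?ler_powR_invp.
split; first exact: powR_invp_unbounded.
exists (@hamming_embedding R) => k s t /andP[/eqP sk _] _.
by split; [exact: Z_mem_hamming_embedding | exact: Z_dist_hamming_embedding].
Qed.
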